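(* Let $G$ be a finite $p$-group, $k$ a field of characteristic $p$, and $I$ a non-zero proper ideal of $kG$. Then $I$, as a $kG$-module, is indecomposable and projective-free. In particular, every non-zero power $J^i(kG)$ of the Jacobson radical $J(kG)$ is an indecomposable projective-free $kG$-module.
   Context: A $kG$-module is projective-free if it has no non-zero projective direct summand (submodule). $J(kG)$ denotes the Jacobson radical of $kG$. *)

From HB Require Import structures.
From mathcomp Require Import all_boot all_order all_fingroup all_solvable all_algebra.
From mathcomp Require Import pgroup mxrepresentation.
Set Implicit Arguments. Unset Strict Implicit. Unset Printing Implicit Defensive.
Import GRing.Theory.
Local Open Scope ring_scope.

(* The group algebra kG is modelled, as in mathcomp's mxrepresentation, by row
   vectors 'rV[F]_#|G| (coordinates w.r.t. the basis G), acted upon on the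
   right by the regular representation [regular_repr F G].  The element v
   corresponds to the matrix [gring_mx (regular_repr F G) v], and the product
   of v and w in kG is v *m gring_mx aG w (= gring_row (gring_mx v *m gring_mx w)). *)

Section GroupAlgebra.
Variables (F : fieldType) (gT : finGroupType) (G : {group gT}).
Local Notation aG := (regular_repr F G).
Local Notation nG := (gcard G).

Definition gring_mul (v w : 'rV[F]_nG) : 'rV[F]_nG := v *m gring_mx aG w.

Definition gring_ideal (U : 'M[F]_nG) : Prop :=
  forall v w : 'rV[F]_nG, (v <= U)%MS ->
    (gring_mul v w <= U)%MS /\ (gring_mul w v <= U)%MS.

Definition in_gring_rad (v : 'rV[F]_nG) : Prop :=
  forall n (rS : mx_representation F G n), mx_irreducible rS -> gring_mx rS v = 0.

Fixpoint in_gring_rad_pow (i : nat) (v : 'rV[F]_nG) : Prop :=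
  match i with
  | 0 => True
  | i'.+1 => exists m (a b : 'I_m -> 'rV[F]_nG),
      (forall k, in_gring_rad_pow i' (a k) /\ in_gring_rad (b k)) /\
      v = \sum_(k < m) gring_mul (a k) (b k)
  end.

Definition mx_intertwines m n (rM : mx_representation F G m)
    (rN : mx_representation F G n) (f : 'M[F]_(m, n)) : Prop :=
  forall x, x \in G -> rM x *m f = f *m rN x.

Definition mx_projective d (rP : mx_representation F G d) : Prop :=
  forall m n (rM : mx_representation F G m) (rN : mx_representation F G n)
    (pi : 'M[F]_(m, n)) (f : 'M[F]_(d, n)),
    mx_intertwines rM rN pi -> row_full pi -> mx_intertwines rP rN f ->
    exists2 h : 'M[F]_(d, m), mx_intertwines rP rM h & h *m pi = f.

Definition mx_indecomposable n (rM : mx_representation F G n) : Prop :=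
  (0 < n)%N /\
  forall V W : 'M[F]_n, mxmodule rM V -> mxmodule rM W ->
    (V + W == 1%:M)%MS -> mxdirect (V + W) -> (V == 0) || (W == 0).

Definition mx_projective_free n (rM : mx_representation F G n) : Prop :=
  forall (V W : 'M[F]_n) (modV : mxmodule rM V), mxmodule rM W ->
    (V + W == 1%:M)%MS -> mxdirect (V + W) ->
    mx_projective (submod_repr modV) -> V == 0.

End GroupAlgebra.

From HB Require Import structures.
From mathcomp Require Import all_boot all_order all_fingroup all_solvable all_algebra.
From mathcomp Require Import pgroup mxrepresentation mxabelem.
Set Implicit Arguments.
Unset Strict Implicit.
Unset Printing Implicit Defensive.
Import GRing.Theory.
Local Open Scope ring_scope.

(* Over a p-group in characteristic p every non-zero module has a non-zero
   fixed vector, and so does its dual, i.e. it has a non-zero map to the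
   trivial module k.  The fixed points of kG form a line, which therefore lies
   in every non-zero submodule of kG; two such submodules cannot meet
   trivially, so every non-zero submodule of kG is indecomposable.
   If V is a non-zero projective module, lift a non-zero map V -> k along the
   augmentation kG -> k to h : V -> kG.  Were h not onto, some non-zero
   invariant functional on kG would vanish on its image; such a functional is
   a multiple of the augmentation, which does not vanish on the image of h.
   Hence dim V >= |G|, so a proper submodule of kG has no non-zero projective
   summand.  Finally J^i (i > 0) is proper, since it acts as 0 on k. *)

Section DualRepresentation.
Variables (F : fieldType) (gT : finGroupType) (G : {group gT}) (n : nat).
Variable rM : mx_representation F G n.

Definition dual_mx (x : gT) := (rM x^-1%g)^T.

Lemma dual_mx_repr : mx_repr G dual_mx.
Proof.
split=> [|x y Gx Gy]; rewrite /dual_mx; first by rewrite invg1 repr_mx1 trmx1.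
by rewrite invMg repr_mxM ?groupV // trmx_mul.
Qed.

Definition dual_repr := MxRepresentation dual_mx_repr.

End DualRepresentation.

Section TrivialRepresentation.
Variables (F : fieldType) (gT : finGroupType) (G : {group gT}).

Definition triv_mx (x : gT) : 'M[F]_1 := 1%:M.

Lemma triv_mx_repr : mx_repr G triv_mx.
Proof. by split=> // x y _ _; rewrite /triv_mx mul1mx. Qed.

Definition triv_repr := MxRepresentation triv_mx_repr.

Lemma triv_repr_irr : mx_irreducible triv_repr.
Proof. exact/mx_abs_irrW/linear_mx_abs_irr. Qed.

End TrivialRepresentation.

Section ModularFixedPoints.
Variables (F : fieldType) (gT : finGroupType) (G : {group gT}) (p : nat).
Hypotheses (pG : (p.-group G)%g) (pF : p \in [pchar F]).

(* A column c fixed by rM encodes the kG-map v |-> v *m c onto the trivial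
   module. *)
Lemma cofix_pgroup_pchar n (rM : mx_representation F G n) : (0 < n)%N ->
  exists2 c : 'cV_n, c != 0 & forall x, x \in G -> rM x *m c = c.
Proof.
move=> n_gt0; have := rfix_pgroup_pchar pF (dual_repr rM) n_gt0 pG (subxx G).
case/rowV0Pn=> r /rfix_mxP r_fix nz_r; exists r^T; first by rewrite trmx_eq0.
move=> x Gx; have := r_fix _ (groupVr Gx); rewrite /= /dual_mx invgK => rxr.
by rewrite -{2}rxr trmx_mul trmxK.
Qed.

Lemma cofix_factmod_pgroup_pchar n (rM : mx_representation F G n) (M : 'M_n) :
  mxmodule rM M -> ~~ row_full M ->
  exists c : 'cV_n, [/\ c != 0, M *m c = 0 & forall x, x \in G -> rM x *m c = c].
Proof.
move=> modM not_full.
have rank_coker_gt0 : (0 < \rank (cokermx M))%N.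
  by rewrite mxrank_coker subn_gt0 ltn_neqAle rank_leq_col andbT.
have [c nz_c cJ] := cofix_pgroup_pchar (factmod_repr modM) rank_coker_gt0.
exists (in_factmod M 1%:M *m c); split.
- apply: contraNneq nz_c => /(congr1 (mulmx (@val_factmod _ _ M _ 1%:M))).
  by rewrite mulmxA -in_factmodE val_factmodK mul1mx mulmx0 => ->.
- have /eqP MM0 : in_factmod M M == 0 by rewrite in_factmod_eq0.
  by rewrite mulmxA -in_factmodE MM0 mul0mx.
- move=> x Gx; rewrite mulmxA -in_factmodE -[rM x]mul1mx (in_factmodJ modM) //.
  by rewrite -mulmxA [_ *m c]cJ.
Qed.

Lemma capmx_rfix_neq0 n (rM : mx_representation F G n) (X : 'M_n) :
  mxmodule rM X -> X != 0 -> (X :&: rfix_mx rM G)%MS != 0.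
Proof.
move=> modX nzX; have := rfix_pgroup_pchar pF (submod_repr modX) _ pG (subxx G).
rewrite -mxrank_eq0 (rfix_submod modX) // mxrank_eq0 lt0n mxrank_eq0.
by move/(_ nzX); apply: contraNneq => ->; rewrite linear0.
Qed.

Lemma mx_indecomposable_rfix n (rM : mx_representation F G n) :
  (0 < n)%N -> (\rank (rfix_mx rM G) <= 1)%N -> mx_indecomposable rM.
Proof.
move=> n_gt0 rank_fix; split=> // V W modV modW _ /mxdirect_addsP VW0.
set R := rfix_mx rM G.
have fix_sub (X : 'M_n) : mxmodule rM X -> X != 0 -> (R <= X)%MS.
  move=> modX /(capmx_rfix_neq0 modX) nzXR.
  have sXR_R : (X :&: R <= R)%MS := capmxSr X R.
  have : (R <= X :&: R)%MS.
    rewrite -(mxrank_leqif_sup sXR_R) eqn_leq (mxrankS sXR_R) /=.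
    by apply: leq_trans rank_fix _; rewrite lt0n mxrank_eq0.
  by move/submx_trans; apply; apply: capmxSl.
apply/contraT; rewrite negb_or => /andP[nzV nzW]; have /eqP R0 : R == 0.
  by rewrite -submx0 -VW0 sub_capmx !fix_sub.
by have := capmx_rfix_neq0 modV nzV; rewrite -/R R0 capmx0 eqxx.
Qed.

End ModularFixedPoints.

Section RegularModule.
Variables (F : fieldType) (gT : finGroupType) (G : {group gT}).
Local Notation nG := (gcard G).
Local Notation aG := (regular_repr F G).

Definition augmentation : 'cV[F]_nG := const_mx 1.

Lemma augmentation_intertwines : mx_intertwines aG (triv_repr F G) augmentation.
Proof.
move=> x Gx; rewrite /= /triv_mx mulmx1; apply/row_matrixP=> i.
by rewrite row_mul rowK -rowE; apply/rowP=> j; rewrite !mxE.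
Qed.

Lemma row_full_augmentation : row_full augmentation.
Proof.
rewrite /row_full eqn_leq rank_leq_col lt0n mxrank_eq0.
apply/eqP=> /matrixP/(_ (gring_index G 1%g) 0); rewrite !mxE => /eqP.
by rewrite oner_eq0.
Qed.

Lemma regular_cofix (c : 'cV[F]_nG) :
  (forall x, x \in G -> aG x *m c = c) -> exists a, c = a *: augmentation.
Proof.
move=> cJ; exists (c (gring_index G 1%g) 0); apply/matrixP=> k j.
rewrite ord1 !mxE mulr1.
have := congr1 (row (gring_index G 1%g)) (cJ _ (enum_valP k)).
rewrite row_mul rowK gring_indexK // mul1g gring_valK -rowE => /rowP/(_ 0).
by rewrite !mxE => ->.
Qed.

Lemma rank_rfix_regular : (\rank (rfix_mx aG G) <= 1)%N.
Proof. by rewrite rfix_regular rank_leq_row. Qed.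

Lemma gring_mx_rad_pow i (v : 'rV[F]_nG) n (rS : mx_representation F G n) :
  mx_irreducible rS -> in_gring_rad_pow i.+1 v -> gring_mx rS v = 0.
Proof.
move=> irrS [m [a [b [ab ->]]]]; rewrite linear_sum big1 // => k _.
by rewrite /gring_mul /= gring_mxA (proj2 (ab k) _ _ irrS) mulmx0.
Qed.

Lemma gring_rad_pow_not_row_full i (U : 'M[F]_nG) : (0 < i)%N ->
  (forall v, (v <= U)%MS <-> in_gring_rad_pow i v) -> ~~ row_full U.
Proof.
case: i => // i _ defU; apply/negP=> /(submx_full (gring_row 1%:M)).
move/defU/(gring_mx_rad_pow (triv_repr_irr F G))/matrixP/(_ 0 0).
by rewrite -gring_opE gring_op1 !mxE => /eqP; rewrite oner_eq0.
Qed.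

End RegularModule.

Section RegularModulePgroup.
Variables (F : fieldType) (gT : finGroupType) (G : {group gT}) (p : nat).
Hypotheses (pG : (p.-group G)%g) (pF : p \in [pchar F]).
Local Notation nG := (gcard G).
Local Notation aG := (regular_repr F G).

Lemma regular_submod_indecomposable (U : 'M[F]_nG) (modU : mxmodule aG U) :
  U != 0 -> mx_indecomposable (submod_repr modU).
Proof.
move=> nzU; apply: (mx_indecomposable_rfix pG pF).
  by rewrite lt0n mxrank_eq0.
rewrite (rfix_submod modU) //; apply: leq_trans (mxrankM_maxl _ _) _.
exact: leq_trans (mxrankS (capmxSr _ _)) (rank_rfix_regular F G).
Qed.

Lemma row_full_regular_hom d (rP : mx_representation F G d) (h : 'M_(d, nG)) :
  mx_intertwines rP aG h -> h *m augmentation F G != 0 -> row_full h.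
Proof.
move=> hJ nz_h_aug; apply/contraT => not_full.
have modh : mxmodule aG <<h>>%MS.
  rewrite (eqmx_module _ (genmxE h)).
  by apply/mxmoduleP=> x Gx; rewrite -hJ // submxMl.
have [|c [nz_c hc0 cJ]] := cofix_factmod_pgroup_pchar pG pF modh.
  by rewrite /row_full genmxE.
have [a def_c] := regular_cofix cJ.
have : h *m c = 0.
  have /submxP[D ->] : (h <= <<h>>)%MS by rewrite genmxE.
  by rewrite -mulmxA hc0 mulmx0.
rewrite def_c -scalemxAr => /eqP; rewrite scalemx_eq0 (negbTE nz_h_aug) orbF.
by move/eqP=> a0; move: nz_c; rewrite def_c a0 scale0r eqxx.
Qed.

Lemma mx_projective_gcard_leq d (rP : mx_representation F G d) :
  mx_projective rP -> (0 < d)%N -> (nG <= d)%N.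
Proof.
move=> projP d_gt0; have [c nz_c cJ] := cofix_pgroup_pchar pG pF rP d_gt0.
have cJ1 : mx_intertwines rP (triv_repr F G) c.
  by move=> x Gx; rewrite /= /triv_mx mulmx1 cJ.
have [h hJ h_aug] := projP _ _ _ _ _ _ (@augmentation_intertwines F gT G)
  (row_full_augmentation F G) cJ1.
have /eqP <- : row_full h by apply: row_full_regular_hom hJ _; rewrite h_aug.
exact: rank_leq_row.
Qed.

Lemma regular_submod_projective_free (U : 'M[F]_nG) (modU : mxmodule aG U) :
  ~~ row_full U -> mx_projective_free (submod_repr modU).
Proof.
move=> not_full V W modV _ _ _ projV; apply/contraT => nzV.
have rankV_lt : (\rank V < nG)%N.
  apply: leq_ltn_trans (rank_leq_row V) _.
  by rewrite ltn_neqAle rank_leq_col andbT.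
have := mx_projective_gcard_leq projV; rewrite lt0n mxrank_eq0 => /(_ nzV).
by rewrite leqNgt rankV_lt.
Qed.

End RegularModulePgroup.

Theorem lemma3p3 (F : fieldType) (gT : finGroupType) (G : {group gT}) (p : nat) :
  (p.-group G)%g -> p \in [pchar F] ->
  (forall (U : 'M[F]_(gcard G)) (modU : mxmodule (regular_repr F G) U),
     gring_ideal U -> U != 0 -> ~~ row_full U ->
     mx_indecomposable (submod_repr modU) /\ mx_projective_free (submod_repr modU))
  /\
  (forall (i : nat) (U : 'M[F]_(gcard G)) (modU : mxmodule (regular_repr F G) U),
     (0 < i)%N ->
     (forall v : 'rV[F]_(gcard G), (v <= U)%MS <-> in_gring_rad_pow i v) ->
     U != 0 ->
     mx_indecomposable (submod_repr modU) /\ mx_projective_free (submod_repr modU)).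
Proof.
move=> pG pF; split=> [U modU _ nzU not_full | i U modU i_gt0 defU nzU].
  split; first exact: regular_submod_indecomposable pG pF _ _ nzU.
  exact: regular_submod_projective_free pG pF _ _ not_full.
split; first exact: regular_submod_indecomposable pG pF _ _ nzU.
apply: regular_submod_projective_free pG pF _ _ _.
exact: gring_rad_pow_not_row_full i_gt0 defU.
Qed.
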